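(* Let $\widehat{\Theta}$ and $\widehat{\Theta}'$ be local $\mathrm{Aut}(F_\infty)$ representations of the same type $\mathcal{L}\in\{A_r\ (r\in\mathbb{Z}_{\ge0}),B,C,D\}$. Then for every oriented link $L$ in $S^3$, $G_{\widehat{\Theta}}(L)\cong G_{\widehat{\Theta}'}(L)$. In particular, if $\tau\in\mathrm{Aut}(F_2)$ is such that the constant sequence $(\tau,\tau,\tau,\dots)$ defines a local $\mathrm{Aut}(F_\infty)$ representation $\widehat{\Theta}_{\tau}$ (a Wada-type representation) of type $\mathcal{L}$, then $G_{\widehat{\Theta}}(L)\cong G_{\widehat{\Theta}_{\tau}}(L)$ for every oriented link $L$.
   Context: $F_2$ is free on $a,b$; $F_n$ is free on $x_1,\dots,x_n$; $B_n$ has standard generators $\sigma_1,\dots,\sigma_{n-1}$ and acts on the right, writing $(x)\phi$. For a word $W$ in $a^{\pm1},b^{\pm1}$, $W(U,V)$ denotes substitution of $U$ for $a$, $V$ for $b$. For $\tau\in\mathrm{Aut}(F_2)$, $T^i(\tau)\in\mathrm{Aut}(F_n)$ fixes $x_j$ ($j\ne i,i+1$) and sends $x_i\mapsto\tau(a)(x_i,x_{i+1})$, $x_{i+1}\mapsto\tau(b)(x_i,x_{i+1})$. A sequence $(\tau_1,\dots,\tau_{n-1})$ in $\mathrm{Aut}(F_2)$ defines a local $\mathrm{Aut}(F_n)$ representation $\Theta_n$ if $\sigma_i\mapsto T^i(\tau_i)$ extends to a homomorphism $B_n\to\mathrm{Aut}(F_n)$. A local $\mathrm{Aut}(F_\infty)$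 representation $\widehat{\Theta}$ is a sequence $(\tau_1,\tau_2,\dots)$ such that for every $n$, $(\tau_1,\dots,\tau_{n-1})$ defines a local $\mathrm{Aut}(F_n)$ representation $\Theta_n$. For $\beta\in B_n$, $G_{\Theta_n}(\beta)=\langle x_1,\dots,x_n\mid (x_i)\Theta_n(\beta)=x_i,\ i=1,\dots,n\rangle$, and $G_{\widehat{\Theta}}(L):=G_{\Theta_n}(\beta)$ for any $n$ and any $\beta\in B_n$ whose closure is $L$ (for the types considered this is well defined up to isomorphism). Natural symmetries on quadruples $(A,B,C,D)$ of reduced words (with $\tau:a\mapsto A,b\mapsto B$, $\kappa:a\mapsto C,b\mapsto D$ automorphisms): Inverse gives the reduced words of $\tau^{-1}(a),\tau^{-1}(b),\kappa^{-1}(a),\kappa^{-1}(b)$; Swap gives $(D^{\sigma},C^{\sigma},B^{\sigma},A^{\sigma})$, $W^\sigma$ interchanging letters $a,b$; Backward gives the four words read backwards. Equivalence up to natural symmetries: related by a composition of these. Labelled list: type $A_r$ ($r\ge0$): $(a^{r}ba^{-r},a,a^{r}ba^{-r},a)$, $(a^{r}ba^{-r},a,a^{r}b^{-1}a^{-r},a^{-1})$, $(a^{r}b^{-1}a^{-r},a^{-1},a^{-r}b^{-1}a^{r},a^{-1})$; type $B$: $(b^{-1},a,b^{-1},a)$, $(b^{-1},a,b,a^{-1})$; type $C$: $(ab^{-1}a,a,ab^{-1}a,a)$, $(ab^{-1}a,a,aba,a^{-1})$, $(aba,a^{-1},aba,a^{-1})$; type $D$: $(a^{-1}b^{-1}a,b^{2}a,a^{-1}b^{-1}a,b^{2}a)$,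 $(aba^{-1},b^{2}a^{-1},a^{-1}b^{-1}a,b^{2}a)$, $(a^{-1}b^{-1}a,b^{2}a,a^{-1}ba,a^{-1}b^{2})$, $(aba^{-1},b^{2}a^{-1},a^{-1}ba,a^{-1}b^{2})$. A local $\mathrm{Aut}(F_\infty)$ representation $(\tau_1,\tau_2,\dots)$ is of type $\mathcal{L}$ if for every $i\ge1$ the quadruple of reduced words $(\tau_i(a),\tau_i(b),\tau_{i+1}(a),\tau_{i+1}(b))$ is equivalent up to natural symmetries to a listed quadruple of type $\mathcal{L}$. *)

From mathcomp Require Import all_boot.

Set Implicit Arguments.
Unset Strict Implicit.
Unset Printing Implicit Defensive.

(* a letter (j, true) is x_j, (j, false) is x_j^{-1} *)
Definition letter (n : nat) := ('I_n * bool)%type.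
Definition word (n : nat) := seq (letter n).

Definition inv_letter n (l : letter n) : letter n := (l.1, ~~ l.2).
Definition inv_word n (w : word n) : word n := rev (map (@inv_letter n) w).
Definition gen n (j : 'I_n) : word n := [:: (j, true)].

(* Group presented by generators 'I_n and relators R: the congruence on words
   generated by free cancellation and r = 1 for r in R. With R = [::] this is
   equality in the free group F_n. *)
Inductive pequiv (n : nat) (R : seq (word n)) : word n -> word n -> Prop :=
| pe_refl w : pequiv R w w
| pe_sym u v : pequiv R u v -> pequiv R v u
| pe_trans u v w : pequiv R u v -> pequiv R v w -> pequiv R u w
| pe_cat u u' v v' : pequiv R u u' -> pequiv R v v' -> pequiv R (u ++ v) (u' ++ v')
| pe_cancel (l : letter n) : pequiv R [:: l; inv_letter l] [::]
| pe_rel r : r \in R -> pequiv R r [::].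

Definition free_equiv n (u v : word n) := pequiv (@nil (word n)) u v.

Definition reduce n (w : word n) : word n :=
  foldr (fun l acc => if acc is l' :: acc'
                      then (if l' == inv_letter l then acc' else l :: acc)
                      else [:: l]) [::] w.

Definition subst n m (f : 'I_n -> word m) (w : word n) : word m :=
  flatten [seq (if l.2 then f l.1 else inv_word (f l.1)) | l <- w].

Definition iso_pres n m (R : seq (word n)) (S : seq (word m)) : Prop :=
  exists h : word n -> word m,
    [/\ (forall u v, pequiv R u v -> pequiv S (h u) (h v)),
        (forall u v, pequiv S (h (u ++ v)) (h u ++ h v)),
        (forall u v, pequiv S (h u) (h v) -> pequiv R u v) &
        (forall w, exists u, pequiv S (h u) w)].

Definition ord_a : 'I_2 := @Ordinal 2 0 isT.
Definition ord_b : 'I_2 := @Ordinal 2 1 isT.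
Definition la : letter 2 := (ord_a, true).
Definition lai : letter 2 := (ord_a, false).
Definition lb : letter 2 := (ord_b, true).
Definition lbi : letter 2 := (ord_b, false).

(* an endomorphism tau of F_2 given by the words (tau(a), tau(b)) *)
Definition aut2 := (word 2 * word 2)%type.
Definition pair2 m (A B : word m) : 'I_2 -> word m :=
  fun k => if val k == 0 then A else B.

Definition inverse_aut2 (t s : aut2) : Prop :=
  forall k : 'I_2,
    free_equiv (subst (pair2 s.1 s.2) (pair2 t.1 t.2 k)) (gen k) /\
    free_equiv (subst (pair2 t.1 t.2) (pair2 s.1 s.2 k)) (gen k).

Definition xw n (k : nat) : word n :=
  [seq ((j, true) : letter n) | j <- enum 'I_n & val j == k].

Definition Tloc n (i : nat) (t : aut2) : 'I_n -> word n :=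
  fun j => if val j == i then subst (fun k : 'I_2 => xw n (i + val k)) t.1
           else if val j == i.+1 then subst (fun k : 'I_2 => xw n (i + val k)) t.2
           else gen j.

(* ---------- braid words; (i, true) = sigma_{i+1}, (i, false) = its inverse ---------- *)
Definition valid_braid (n : nat) (beta : seq (nat * bool)) :=
  all (fun s => s.1.+1 < n) beta.

Inductive bequiv (n : nat) : seq (nat * bool) -> seq (nat * bool) -> Prop :=
| be_refl w : bequiv n w w
| be_sym u v : bequiv n u v -> bequiv n v u
| be_trans u v w : bequiv n u v -> bequiv n v w -> bequiv n u w
| be_cat u u' v v' : bequiv n u u' -> bequiv n v v' -> bequiv n (u ++ v) (u' ++ v')
| be_cancel i b : i.+1 < n -> bequiv n [:: (i, b); (i, ~~ b)] [::]
| be_braid i : i.+2 < n ->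
    bequiv n [:: (i, true); (i.+1, true); (i, true)] [:: (i.+1, true); (i, true); (i.+1, true)]
| be_comm i j : j.+1 < n -> i.+1 < j ->
    bequiv n [:: (i, true); (j, true)] [:: (j, true); (i, true)].

(* right action (w)Theta_n(beta): sigma_i acts by T^i(tau_i), sigma_i^{-1} by
   T^i(tau_i^{-1}); tau is 0-based (tau k = tau_{k+1}), taui k = tau_{k+1}^{-1} *)
Definition act n (tau taui : nat -> aut2) (beta : seq (nat * bool)) (w : word n) : word n :=
  foldl (fun (w : word n) (s : nat * bool) => subst (@Tloc n s.1 (if s.2 then tau s.1 else taui s.1)) w) w beta.

(* (tau_1,...,tau_{n-1}) defines a local Aut(F_n) representation:
   sigma_i |-> T^i(tau_i) extends to a homomorphism B_n -> Aut(F_n) *)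
Definition local_rep n (tau taui : nat -> aut2) : Prop :=
  forall beta beta', valid_braid n beta -> valid_braid n beta' -> bequiv n beta beta' ->
    forall j : 'I_n, free_equiv (act tau taui beta (gen j)) (act tau taui beta' (gen j)).

Definition local_inf (tau taui : nat -> aut2) : Prop := forall n, local_rep n tau taui.

(* relators of G_Theta(beta) = < x_j | (x_j)Theta(beta) = x_j > *)
Definition Gpres n (tau taui : nat -> aut2) (beta : seq (nat * bool)) : seq (word n) :=
  [seq act tau taui beta (gen j) ++ [:: inv_letter (j, true)] | j <- enum 'I_n].

Definition quad := (aut2 * aut2)%type.

Definition reducedw n (w : word n) := reduce w = w.

Definition reducedq (Q : quad) : Prop :=
  [/\ reducedw Q.1.1, reducedw Q.1.2, reducedw Q.2.1 & reducedw Q.2.2].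

Definition inv_step (Q Q' : quad) : Prop :=
  [/\ reducedq Q, reducedq Q', inverse_aut2 Q.1 Q'.1 & inverse_aut2 Q.2 Q'.2].

Definition swap_letter (l : letter 2) : letter 2 :=
  (if val l.1 == 0 then ord_b else ord_a, l.2).
Definition swapw (w : word 2) : word 2 := map swap_letter w.
Definition swapQ (Q : quad) : quad :=
  ((swapw Q.2.2, swapw Q.2.1), (swapw Q.1.2, swapw Q.1.1)).
Definition backQ (Q : quad) : quad :=
  ((rev Q.1.1, rev Q.1.2), (rev Q.2.1, rev Q.2.2)).

Definition sym_step (Q Q' : quad) : Prop :=
  inv_step Q Q' \/ Q' = swapQ Q \/ Q' = backQ Q.

Inductive sym_equiv : quad -> quad -> Prop :=
| se_refl Q : sym_equiv Q Q
| se_step Q1 Q2 Q3 : sym_step Q1 Q2 -> sym_equiv Q2 Q3 -> sym_equiv Q1 Q3.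

Inductive ltype := TA of nat | TB | TC | TD.

Definition cnj (r : nat) (w : word 2) : word 2 := nseq r la ++ w ++ nseq r lai.
Definition cnji (r : nat) (w : word 2) : word 2 := nseq r lai ++ w ++ nseq r la.

Definition listed (L : ltype) : seq quad :=
  match L with
  | TA r => [:: ((cnj r [:: lb], [:: la]), (cnj r [:: lb], [:: la]));
                ((cnj r [:: lb], [:: la]), (cnj r [:: lbi], [:: lai]));
                ((cnj r [:: lbi], [:: lai]), (cnji r [:: lbi], [:: lai]))]
  | TB => [:: (([:: lbi], [:: la]), ([:: lbi], [:: la]));
              (([:: lbi], [:: la]), ([:: lb], [:: lai]))]
  | TC => [:: (([:: la; lbi; la], [:: la]), ([:: la; lbi; la], [:: la]));
              (([:: la; lbi; la], [:: la]), ([:: la; lb; la], [:: lai]));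
              (([:: la; lb; la], [:: lai]), ([:: la; lb; la], [:: lai]))]
  | TD => [:: (([:: lai; lbi; la], [:: lb; lb; la]), ([:: lai; lbi; la], [:: lb; lb; la]));
              (([:: la; lb; lai], [:: lb; lb; lai]), ([:: lai; lbi; la], [:: lb; lb; la]));
              (([:: lai; lbi; la], [:: lb; lb; la]), ([:: lai; lb; la], [:: lai; lb; lb]));
              (([:: la; lb; lai], [:: lb; lb; lai]), ([:: lai; lb; la], [:: lai; lb; lb]))]
  end.

Definition has_type (L : ltype) (tau : nat -> aut2) : Prop :=
  forall i, exists2 Q, Q \in listed L &
    sym_equiv ((reduce (tau i).1, reduce (tau i).2),
               (reduce (tau i.+1).1, reduce (tau i.+1).2)) Q.

(* Write Theta_n(beta) as a substitution of F_n; the fixed-point presentation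
   <x | (x)Theta = x> only depends on Theta up to conjugation by an automorphism of F_n.
   For each type there are an automorphism g of F_2 and its inverse h such that every
   listed quadruple, hence (through the natural symmetries) every sequence of that type,
   has the form tau_i = s_i u s_i with u = g for all i or u = h for all i, where s_i is
   the sign automorphism a -> a^(E i), b -> b^(E (i+1)) for one sign sequence E.
   Conjugating by x_j -> x_j^(E j) turns Theta_n(beta) into the constant representation of
   g or of h, and these two are conjugate: reversing the strands sends beta to its flip,
   and the Garside element Delta satisfies Delta beta = flip(beta) Delta in B_n. *)

From mathcomp Require Import all_boot zify.
From Stdlib Require Import Setoid Morphisms FunctionalExtensionality.

Set Implicit Arguments.
Unset Strict Implicit.
Unset Printing Implicit Defensive.

#[local] Hint Resolve pe_refl be_refl : core.

(** * Words, free reduction and substitutions *)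

Section Words.
Variable n : nat.
Implicit Types (l : letter n) (u v w : word n) (R : seq (word n)).

Lemma inv_letterK : involutive (@inv_letter n).
Proof. by case=> j b; rewrite /inv_letter /= negbK. Qed.

Lemma inv_letter_neq l : l != inv_letter l.
Proof. by case: l => j b; rewrite /inv_letter xpair_eqE eqxx; case: b. Qed.

Lemma inv_word_cat u v : inv_word (u ++ v) = inv_word v ++ inv_word u.
Proof. by rewrite /inv_word map_cat rev_cat. Qed.

Lemma inv_word_cons l w : inv_word (l :: w) = inv_word w ++ [:: inv_letter l].
Proof. by rewrite /inv_word /= rev_cons cats1. Qed.

Lemma inv_wordK : involutive (@inv_word n).
Proof. by move=> w; rewrite /inv_word map_rev revK (mapK inv_letterK). Qed.

Lemma inv_word_nseq r l : inv_word (nseq r l) = nseq r (inv_letter l).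
Proof. by rewrite /inv_word map_nseq rev_nseq. Qed.

Global Instance pequiv_Equivalence R : Equivalence (pequiv R).
Proof. by split; [exact: pe_refl | exact: pe_sym | exact: pe_trans]. Qed.

Global Instance cat_pequiv_Proper R :
  Proper (pequiv R ==> pequiv R ==> pequiv R) (@cat (letter n)).
Proof. by move=> u u' Hu v v' Hv; apply: pe_cat. Qed.

Global Instance cons_pequiv_Proper R l : Proper (pequiv R ==> pequiv R) (cons l).
Proof. by move=> u v Huv; rewrite -cat1s -[l :: v]cat1s Huv. Qed.

Lemma free_pequiv R u v : free_equiv u v -> pequiv R u v.
Proof.
elim=> [w | {}u {}v _ IH | {}u {}v w _ IHuv _ IHvw | u1 u2 v1 v2 _ IH1 _ IH2 | l | //].
- by [].
- by symmetry.
- by rewrite IHuv.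
- exact: pe_cat.
- exact: pe_cancel.
Qed.

Global Instance free_pequiv_subrelation R : subrelation (@free_equiv n) (pequiv R).
Proof. by move=> u v; apply: free_pequiv. Qed.

Global Instance free_equiv_Equivalence : Equivalence (@free_equiv n).
Proof. exact: pequiv_Equivalence. Qed.

Global Instance cons_free_equiv_Proper l : Proper (@free_equiv n ==> @free_equiv n) (cons l).
Proof. exact: cons_pequiv_Proper. Qed.

Lemma pequiv_inv_letter R l : pequiv R [:: inv_letter l; l] [::].
Proof. by rewrite -{2}(inv_letterK l); apply: pe_cancel. Qed.

Lemma pequiv_cat_inv R w : pequiv R (w ++ inv_word w) [::].
Proof.
elim: w => [|l w IH] /=; first by [].
by rewrite inv_word_cons catA IH; apply: pe_cancel.
Qed.

Lemma pequiv_inv_cat R w : pequiv R (inv_word w ++ w) [::].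
Proof. by rewrite -{2}(inv_wordK w); apply: pequiv_cat_inv. Qed.

Global Instance inv_word_Proper R : Proper (pequiv R ==> pequiv R) (@inv_word n).
Proof.
move=> u v Huv.
transitivity (inv_word u ++ v ++ inv_word v); first by rewrite pequiv_cat_inv cats0.
transitivity (inv_word u ++ u ++ inv_word v); last by rewrite catA pequiv_inv_cat.
by apply: pe_cat => //; apply: pe_cat => //; symmetry.
Qed.


End Words.

Section Reduction.
Variable n : nat.
Implicit Types (l : letter n) (u v w acc : word n).

Definition reduce_step l w : word n :=
  if w is l' :: w' then (if l' == inv_letter l then w' else l :: w) else [:: l].

Definition nocancel : rel (letter n) := fun l l' => l' != inv_letter l.
Definition reducedb w := sorted nocancel w.

Lemma reducedb_step l w : reducedb w -> reducedb (reduce_step l w).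
Proof.
case: w => [|l' w] //= Hw; case: eqP => [_ | /eqP Hne] /=.
- by move: Hw; rewrite /reducedb; case: w => //= l'' w /andP [].
- by rewrite /nocancel Hne.
Qed.

Lemma reduce_stepK l w : reducedb w -> reduce_step l (reduce_step (inv_letter l) w) = w.
Proof.
case: w => [|l' w] /=; first by rewrite eqxx.
rewrite inv_letterK; case: eqP => [<- | _] /=; last by rewrite eqxx.
by case: w => [|l'' w] //= /andP [/negbTE ->].
Qed.

Lemma reducedb_foldr u acc : reducedb acc -> reducedb (foldr reduce_step acc u).
Proof. by elim: u => [|l u IH] //= Hacc; apply/reducedb_step/IH. Qed.

Lemma free_foldr_reduce u v : free_equiv u v ->
  forall acc, reducedb acc -> foldr reduce_step acc u = foldr reduce_step acc v.
Proof.
elim=> [w | {}u {}v _ IH | {}u {}v w _ IHuv _ IHvw | u1 u2 v1 v2 _ IH1 _ IH2 | l | //]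
  acc Hacc //.
- by rewrite IH.
- by rewrite IHuv // IHvw.
- by rewrite !foldr_cat IH2 // IH1 //; apply: reducedb_foldr.
- exact: reduce_stepK.
Qed.

Lemma reduce_free u v : free_equiv u v -> reduce u = reduce v.
Proof. by move=> Huv; apply: free_foldr_reduce. Qed.

Lemma free_reduce_step l w : free_equiv (reduce_step l w) (l :: w).
Proof.
case: w => [|l' w] //=; case: eqP => [-> | _] //.
by rewrite -[l :: _]/([:: l; inv_letter l] ++ w) (pe_cancel [::] l).
Qed.

Lemma free_reduce w : free_equiv (reduce w) w.
Proof.
elim: w => [|l w IH] //=.
by rewrite -/(reduce_step l (reduce w)) free_reduce_step IH.
Qed.

Lemma reducedb_reduce w : reducedb (reduce w).
Proof. exact: reducedb_foldr. Qed.

Lemma reduce_id w : reducedb w -> reduce w = w.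
Proof.
elim: w => [|l w IH] //= Hw.
rewrite -/(reduce_step l (reduce w)) IH; last by case: w Hw {IH} => //= l' w /andP [].
by case: w Hw {IH} => [|l' w] //= /andP [/negbTE ->].
Qed.

Lemma reducedP w : reducedw w <-> reducedb w.
Proof. by split=> [<- | /reduce_id]; first exact: reducedb_reduce. Qed.

Lemma free_equivP u v : free_equiv u v <-> reduce u = reduce v.
Proof.
split=> [/reduce_free // | Huv].
by rewrite -(free_reduce u) Huv free_reduce.
Qed.

Lemma free_equiv_reduced u v : free_equiv u v -> reducedw u -> reducedw v -> u = v.
Proof. by move=> /reduce_free Huv <- <-. Qed.

End Reduction.

Section Substitution.
Variables n m p : nat.
Implicit Types (f g : 'I_n -> word m) (u v w : word n) (R : seq (word n)) (S : seq (word m)).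

Lemma subst_cat f u v : subst f (u ++ v) = subst f u ++ subst f v.
Proof. by rewrite /subst map_cat flatten_cat. Qed.

Lemma subst_cons f l w :
  subst f (l :: w) = (if l.2 then f l.1 else inv_word (f l.1)) ++ subst f w.
Proof. by []. Qed.

Lemma subst_gen1 f j : subst f (gen j) = f j.
Proof. by rewrite subst_cons cats0. Qed.

Lemma subst_inv f w : subst f (inv_word w) = inv_word (subst f w).
Proof.
elim: w => [|[j b] w IH] //.
rewrite inv_word_cons subst_cat IH subst_cons inv_word_cat /=.
by case: b; rewrite /= ?inv_wordK cats0.
Qed.

Lemma subst_pequiv f R S : (forall r, r \in R -> pequiv S (subst f r) [::]) ->
  forall u v, pequiv R u v -> pequiv S (subst f u) (subst f v).
Proof.
move=> hR u v.
elim=> [w | {}u {}v _ IH | {}u {}v w _ IHuv _ IHvw | u1 u2 v1 v2 _ IH1 _ IH2 | [j b] | r /hR //].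
- by [].
- by symmetry.
- by rewrite IHuv.
- by rewrite !subst_cat; apply: pe_cat.
- rewrite /= subst_cons /= subst_cons cats0.
  by case: b; rewrite /= ?inv_wordK; [apply: pequiv_cat_inv | apply: pequiv_inv_cat].
Qed.

Lemma subst_free f u v : free_equiv u v -> free_equiv (subst f u) (subst f v).
Proof. by apply: subst_pequiv. Qed.

Lemma eq_subst_pequiv f g S : (forall j, pequiv S (f j) (g j)) ->
  forall w, pequiv S (subst f w) (subst g w).
Proof.
move=> Hfg; elim=> [|[j b] w IH] //.
by rewrite !subst_cons IH; case: b => /=; rewrite Hfg.
Qed.

End Substitution.

Definition feq n m (f g : 'I_n -> word m) := forall j, free_equiv (f j) (g j).

Global Instance feq_Equivalence n m : Equivalence (@feq n m).
Proof. by split=> [f j | f g H j | f g h H1 H2 j] //; [symmetry | rewrite H1]. Qed.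

#[local] Hint Extern 0 (feq _ _) => reflexivity : core.

Global Instance subst_Proper n m :
  Proper (@feq n m ==> @free_equiv n ==> @free_equiv m) (@subst n m).
Proof. by move=> f g Hfg u v /(subst_free f) ->; apply: eq_subst_pequiv. Qed.

Lemma subst_gen n (w : word n) : subst (@gen n) w = w.
Proof. by elim: w => [|[j b] w IH] //; rewrite subst_cons IH; case: b. Qed.

Definition scomp n m p (f : 'I_m -> word p) (g : 'I_n -> word m) : 'I_n -> word p :=
  fun j => subst f (g j).

Lemma subst_comp n m p (f : 'I_m -> word p) (g : 'I_n -> word m) w :
  subst f (subst g w) = subst (scomp f g) w.
Proof.
elim: w => [|[j b] w IH] //; rewrite !subst_cons subst_cat IH.
by case: b; rewrite //= subst_inv.
Qed.

Section Composition.
Variables n m p q : nat.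

Lemma scompA (f : 'I_p -> word q) (g : 'I_m -> word p) (h : 'I_n -> word m) :
  scomp f (scomp g h) = scomp (scomp f g) h.
Proof. by apply: functional_extensionality => j; rewrite /scomp subst_comp. Qed.

Lemma scomp_genl (f : 'I_n -> word m) : scomp (@gen m) f = f.
Proof. by apply: functional_extensionality => j; rewrite /scomp subst_gen. Qed.

Lemma scomp_genr (f : 'I_n -> word m) : scomp f (@gen n) = f.
Proof. by apply: functional_extensionality => j; rewrite /scomp subst_gen1. Qed.

Global Instance scomp_Proper :
  Proper (@feq m p ==> @feq n m ==> @feq n p) (@scomp n m p).
Proof. by move=> f f' Hf g g' Hg j; rewrite /scomp (Hg j); apply: subst_Proper. Qed.

End Composition.

(** * Conjugate substitutions and fixed-point presentations *)

Section Conjugation.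
Variable n : nat.
Implicit Types (Phi psi chi : 'I_n -> word n).

Definition conj_sub Phi Phi' psi chi :=
  [/\ feq (scomp chi psi) (@gen n), feq (scomp psi chi) (@gen n) &
      feq (scomp psi Phi') (scomp Phi psi)].

Lemma conj_sub_sym Phi Phi' psi chi : conj_sub Phi Phi' psi chi -> conj_sub Phi' Phi chi psi.
Proof.
case=> Hchi Hpsi Hconj; split => //.
rewrite -[Phi in scomp chi Phi]scomp_genr -Hpsi (scompA Phi) -Hconj.
by rewrite -(scompA psi) scompA Hchi scomp_genl.
Qed.

Lemma conj_sub_trans Phi Phi' Phi'' psi chi psi' chi' :
  conj_sub Phi Phi' psi chi -> conj_sub Phi' Phi'' psi' chi' ->
  conj_sub Phi Phi'' (scomp psi psi') (scomp chi' chi).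
Proof.
case=> H1 H2 H3 [K1 K2 K3]; split.
- by rewrite scompA -(scompA chi' chi) H1 scomp_genr K1.
- by rewrite scompA -(scompA psi psi') K2 scomp_genr H2.
- by rewrite -scompA K3 !scompA H3.
Qed.

Lemma conj_sub_gen psi chi : feq (scomp chi psi) (@gen n) -> feq (scomp psi chi) (@gen n) ->
  conj_sub (@gen n) (@gen n) psi chi.
Proof. by move=> H1 H2; split; rewrite // scomp_genl scomp_genr. Qed.

Lemma conj_sub_scomp Phi Phi' T T' psi chi :
  conj_sub Phi Phi' psi chi -> feq (scomp psi T') (scomp T psi) ->
  conj_sub (scomp Phi T) (scomp Phi' T') psi chi.
Proof. by case=> H1 H2 H3 HT; split; rewrite // scompA H3 -scompA HT scompA. Qed.

Definition fix_rels Phi : seq (word n) :=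
  [seq Phi j ++ [:: inv_letter (j, true)] | j <- enum 'I_n].

Lemma fix_rels_gen Phi j : pequiv (fix_rels Phi) (Phi j) (gen j).
Proof.
have Hr : pequiv (fix_rels Phi) (Phi j ++ [:: inv_letter (j, true)]) [::].
  by apply: pe_rel; apply: map_f; rewrite mem_enum.
transitivity (Phi j ++ [:: inv_letter (j, true)] ++ gen j).
  by rewrite cat1s pequiv_inv_letter cats0.
by rewrite catA Hr.
Qed.

Lemma subst_fix_rels Phi w : pequiv (fix_rels Phi) (subst Phi w) w.
Proof. by rewrite -{2}(subst_gen w); apply: eq_subst_pequiv => j; apply: fix_rels_gen. Qed.

Lemma conj_sub_pequiv Phi Phi' psi chi : conj_sub Phi Phi' psi chi ->
  forall u v, pequiv (fix_rels Phi) u v -> pequiv (fix_rels Phi') (subst chi u) (subst chi v).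
Proof.
move=> /conj_sub_sym [_ _ Hconj]; apply: subst_pequiv => _ /mapP [j _ ->].
rewrite subst_cat subst_cons /= cats0.
rewrite -/(scomp chi Phi j) (free_pequiv _ (Hconj j)).
by rewrite /scomp subst_fix_rels pequiv_cat_inv.
Qed.

Lemma conj_sub_iso_pres Phi Phi' psi chi :
  conj_sub Phi Phi' psi chi -> iso_pres (fix_rels Phi) (fix_rels Phi').
Proof.
move=> Hc; have [Hchi Hpsi _] := Hc.
have subst_inv_sub (phi phi' : 'I_n -> word n) w :
    feq (scomp phi phi') (@gen n) -> free_equiv (subst phi (subst phi' w)) w.
  by move=> H; rewrite subst_comp H subst_gen.
exists (subst chi); split.
- exact: conj_sub_pequiv Hc.
- by move=> u v; rewrite subst_cat.
- move=> u v /(conj_sub_pequiv (conj_sub_sym Hc)) Huv.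
  rewrite -(free_pequiv _ (subst_inv_sub psi chi u Hpsi)).
  by rewrite -(free_pequiv _ (subst_inv_sub psi chi v Hpsi)).
- by move=> w; exists (subst psi w); rewrite subst_inv_sub.
Qed.

Definition conjugate Phi Phi' := exists psi chi, conj_sub Phi Phi' psi chi.

Lemma conjugate_sym Phi Phi' : conjugate Phi Phi' -> conjugate Phi' Phi.
Proof. by case=> [psi [chi /conj_sub_sym Hc]]; exists chi, psi. Qed.

Lemma conjugate_trans Phi Phi' Phi'' :
  conjugate Phi Phi' -> conjugate Phi' Phi'' -> conjugate Phi Phi''.
Proof.
case=> [psi [chi H]] [psi' [chi' /(conj_sub_trans H) H']].
by exists (scomp psi psi'), (scomp chi' chi).
Qed.

Lemma conjugate_iso_pres Phi Phi' : conjugate Phi Phi' -> iso_pres (fix_rels Phi) (fix_rels Phi').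
Proof. by case=> [psi [chi /conj_sub_iso_pres]]. Qed.

End Conjugation.

Section Representation.
Variables (n : nat) (tau taui : nat -> aut2).

Definition theta beta : 'I_n -> word n := fun j => act tau taui beta (gen j).

Definition theta_letter (s : nat * bool) : 'I_n -> word n :=
  @Tloc n s.1 (if s.2 then tau s.1 else taui s.1).

Lemma act_cons s beta w :
  act tau taui (s :: beta) w = act tau taui beta (subst (theta_letter s) w).
Proof. by []. Qed.

Lemma act_subst beta w : act tau taui beta w = subst (theta beta) w.
Proof.
elim: beta w => [|s beta IH] w; first by rewrite subst_gen.
rewrite act_cons IH subst_comp; congr subst.
by apply: functional_extensionality => j; rewrite /theta act_cons IH subst_gen1.
Qed.

Lemma theta_cons s beta : theta (s :: beta) = scomp (theta beta) (theta_letter s).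
Proof.
by apply: functional_extensionality => j; rewrite /theta act_cons act_subst subst_gen1.
Qed.

Lemma theta_cat beta beta' : theta (beta ++ beta') = scomp (theta beta') (theta beta).
Proof.
elim: beta => [|s beta IH] /=; first by rewrite scomp_genr.
by rewrite !theta_cons IH scompA.
Qed.

End Representation.

Arguments theta : clear implicits.

(** * Sign gauges and strand reversal *)

Lemma ord2P (k : 'I_2) : k = ord_a \/ k = ord_b.
Proof. by case: k => [[|[|k]] Hk] //; [left | right]; apply: val_inj. Qed.

Definition aut_sub (t : aut2) : 'I_2 -> word 2 := pair2 t.1 t.2.
Definition sub_aut (f : 'I_2 -> word 2) : aut2 := (f ord_a, f ord_b).

Lemma sub_autK f : aut_sub (sub_aut f) = f.
Proof. by apply: functional_extensionality => k; case: (ord2P k) => ->. Qed.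

Lemma aut_subK t : sub_aut (aut_sub t) = t.
Proof. by case: t. Qed.

Definition feq2 (t s : aut2) := feq (aut_sub t) (aut_sub s).

Global Instance feq2_Equivalence : Equivalence feq2.
Proof. by split=> [t | t s | t s u]; rewrite /feq2 => //; [symmetry | etransitivity; eauto]. Qed.

#[local] Hint Extern 0 (feq2 _ _) => reflexivity : core.

Section LocalSubstitution.
Variable n : nat.

Definition emb i : 'I_2 -> word n := fun k => xw n (i + val k).

Lemma xw_gen k (Hk : k < n) : xw n k = gen (Ordinal Hk).
Proof.
rewrite /xw; suff -> : [seq j <- enum 'I_n | val j == k] = [:: Ordinal Hk] by [].
rewrite -(filter_pred1_uniq (enum_uniq 'I_n) (mem_enum _ (Ordinal Hk))).
by apply: eq_filter => j /=; apply/eqP/eqP => [Hj | ->] //; apply: val_inj.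
Qed.

Lemma emb_a i (Hi : i < n) : emb i ord_a = gen (Ordinal Hi).
Proof. by rewrite /emb addn0 xw_gen. Qed.

Lemma emb_b i (Hi : i.+1 < n) : emb i ord_b = gen (Ordinal Hi).
Proof. by rewrite /emb addn1 xw_gen. Qed.

Lemma Tloc_emb i t : i.+1 < n -> scomp (@Tloc n i t) (emb i) = scomp (emb i) (aut_sub t).
Proof.
move=> Hi; apply: functional_extensionality => k; rewrite /scomp.
case: (ord2P k) => -> /=.
- by rewrite (emb_a (ltnW Hi)) subst_gen1 /Tloc eqxx.
- by rewrite (emb_b Hi) subst_gen1 /Tloc /= eqxx (gtn_eqF (ltnSn i)).
Qed.

Lemma Tloc_far i t (j : 'I_n) : val j != i -> val j != i.+1 -> @Tloc n i t j = gen j.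
Proof. by rewrite /Tloc => /negbTE -> /negbTE ->. Qed.

Lemma feq_local i (f g : 'I_n -> word n) : i.+1 < n ->
  feq (scomp f (emb i)) (scomp g (emb i)) ->
  (forall j : 'I_n, val j != i -> val j != i.+1 -> free_equiv (f j) (g j)) ->
  feq f g.
Proof.
move=> Hi Hemb Hfar j.
case: (eqVneq (val j) i) => [Hj | Hj]; last case: (eqVneq (val j) i.+1) => [Hj' | Hj'].
- have := Hemb ord_a; rewrite /scomp (emb_a (ltnW Hi)) !subst_gen1.
  by congr free_equiv; congr (_ _); apply: val_inj.
- have := Hemb ord_b; rewrite /scomp (emb_b Hi) !subst_gen1.
  by congr free_equiv; congr (_ _); apply: val_inj.
- exact: Hfar.
Qed.

End LocalSubstitution.

Arguments emb : clear implicits.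

Definition sign_sub n (E : 'I_n -> bool) : 'I_n -> word n := fun j => [:: (j, E j)].

Lemma sign_subK n (E : 'I_n -> bool) : scomp (sign_sub E) (sign_sub E) = @gen n.
Proof.
apply: functional_extensionality => j; rewrite /scomp /sign_sub subst_cons /= cats0.
by case: (E j).
Qed.

Lemma subst_sign_sub1 n m (f : 'I_n -> word m) (E : 'I_n -> bool) j :
  subst f (sign_sub E j) = if E j then f j else inv_word (f j).
Proof. by rewrite /sign_sub subst_cons /= cats0. Qed.

Definition sign2 (x y : bool) : 'I_2 -> word 2 :=
  sign_sub (fun k : 'I_2 => if val k == 0 then x else y).

Lemma sign2K x y : scomp (sign2 x y) (sign2 x y) = @gen 2.
Proof. exact: sign_subK. Qed.

Definition sign_nat n (E : nat -> bool) : 'I_n -> word n := sign_sub (fun j : 'I_n => E (val j)).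
Arguments sign_nat : clear implicits.

Definition gauge x y (t : aut2) : aut2 :=
  sub_aut (scomp (sign2 x y) (scomp (aut_sub t) (sign2 x y))).

Lemma aut_sub_gauge x y t :
  aut_sub (gauge x y t) = scomp (sign2 x y) (scomp (aut_sub t) (sign2 x y)).
Proof. exact: sub_autK. Qed.

Section SignGauge.
Variables (n : nat) (E : nat -> bool).

Lemma sign_nat_emb i : i.+1 < n ->
  scomp (sign_nat n E) (emb n i) = scomp (emb n i) (sign2 (E i) (E i.+1)).
Proof.
move=> Hi; apply: functional_extensionality => k; rewrite /scomp subst_sign_sub1.
case: (ord2P k) => -> /=.
- by rewrite (emb_a (ltnW Hi)) subst_gen1 /sign_nat /sign_sub; case: (E i).
- by rewrite (emb_b Hi) subst_gen1 /sign_nat /sign_sub; case: (E i.+1).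
Qed.

Lemma gauge_Tloc i (u u0 : aut2) : i.+1 < n -> feq2 u (gauge (E i) (E i.+1) u0) ->
  feq (scomp (sign_nat n E) (@Tloc n i u0)) (scomp (@Tloc n i u) (sign_nat n E)).
Proof.
move=> Hi; rewrite /feq2 aut_sub_gauge => Hu; apply: (feq_local Hi).
  rewrite -!scompA (Tloc_emb u0) // sign_nat_emb // scompA sign_nat_emb //.
  rewrite !scompA Tloc_emb // -!scompA Hu.
  by rewrite -!scompA sign2K scomp_genr.
move=> j Hj Hj'; rewrite /scomp subst_sign_sub1 !Tloc_far // subst_gen1.
by rewrite /sign_nat /sign_sub; case: (E (val j)).
Qed.

Lemma gauge_theta (tau taui : nat -> aut2) (t ti : aut2) :
  (forall i, feq2 (tau i) (gauge (E i) (E i.+1) t)) ->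
  (forall i, feq2 (taui i) (gauge (E i) (E i.+1) ti)) ->
  forall beta, valid_braid n beta ->
  conj_sub (theta n tau taui beta) (theta n (fun=> t) (fun=> ti) beta)
           (sign_nat n E) (sign_nat n E).
Proof.
move=> Ht Hti; elim=> [|s beta IH] /=.
  by move=> _; apply: conj_sub_gen; rewrite sign_subK.
case/andP=> Hs /IH Hbeta; rewrite !theta_cons; apply: conj_sub_scomp => //.
by rewrite /theta_letter; case: s.2; apply: gauge_Tloc.
Qed.

End SignGauge.

Definition swap_aut (t : aut2) : aut2 := (swapw t.2, swapw t.1).
Definition swap_sub : 'I_2 -> word 2 := fun k => gen (if val k == 0 then ord_b else ord_a).
Definition rev_strands n : 'I_n -> word n := fun j => gen (rev_ord j).
Arguments rev_strands : clear implicits.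

Lemma swap_subK : scomp swap_sub swap_sub = @gen 2.
Proof.
apply: functional_extensionality => k; rewrite /scomp subst_gen1.
by case: (ord2P k) => ->.
Qed.

Lemma swapw_subst w : swapw w = subst swap_sub w.
Proof. by elim: w => [|[k b] w IH] //=; rewrite subst_cons -IH; case: b. Qed.

Lemma aut_sub_swap t : aut_sub (swap_aut t) = scomp swap_sub (scomp (aut_sub t) swap_sub).
Proof.
apply: functional_extensionality => k; rewrite /scomp subst_gen1.
by case: (ord2P k) => ->; rewrite /aut_sub /pair2 /= swapw_subst.
Qed.

Lemma rev_strandsK n : scomp (rev_strands n) (rev_strands n) = @gen n.
Proof.
by apply: functional_extensionality => j; rewrite /scomp /rev_strands subst_gen1 rev_ordK.
Qed.

Lemma rev_strands_emb n i : i.+1 < n ->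
  scomp (rev_strands n) (emb n (n - i.+2)) = scomp (emb n i) swap_sub.
Proof.
move=> Hi; have Hi' : (n - i.+2).+1 < n by lia.
apply: functional_extensionality => k; rewrite /scomp /swap_sub subst_gen1.
case: (ord2P k) => -> /=.
- rewrite (emb_a (ltnW Hi')) subst_gen1 (emb_b Hi).
  by congr gen; apply: val_inj => /=; lia.
- rewrite (emb_b Hi') subst_gen1 (emb_a (ltnW Hi)).
  by congr gen; apply: val_inj => /=; lia.
Qed.

Lemma Tloc_rev_strands n i t : i.+1 < n ->
  feq (scomp (rev_strands n) (@Tloc n (n - i.+2) (swap_aut t)))
      (scomp (@Tloc n i t) (rev_strands n)).
Proof.
move=> Hi; have Hi' : (n - i.+2).+1 < n by lia.
apply: (feq_local Hi').
  rewrite -!scompA Tloc_emb // rev_strands_emb // scompA rev_strands_emb //.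
  rewrite !scompA Tloc_emb // -!scompA aut_sub_swap.
  by rewrite (scompA swap_sub) swap_subK scomp_genl.
move=> j Hj Hj'; rewrite /scomp /rev_strands !subst_gen1 !Tloc_far //=.
all: by move: Hj Hj' (ltn_ord j) => /=; lia.
Qed.

Definition flip_braid n (beta : seq (nat * bool)) : seq (nat * bool) :=
  [seq (n - s.1.+2, s.2) | s <- beta].

Lemma valid_flip_braid n beta : valid_braid n beta -> valid_braid n (flip_braid n beta).
Proof. by elim: beta => [|s beta IH] //= /andP [Hs /IH ->]; rewrite andbT; lia. Qed.

Lemma rev_strands_theta n (t ti : aut2) beta : valid_braid n beta ->
  conj_sub (theta n (fun=> t) (fun=> ti) beta)
           (theta n (fun=> swap_aut t) (fun=> swap_aut ti) (flip_braid n beta))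
           (rev_strands n) (rev_strands n).
Proof.
elim: beta => [|s beta IH] /=.
  by move=> _; apply: conj_sub_gen; rewrite rev_strandsK.
case/andP=> Hs /IH Hbeta; rewrite !theta_cons; apply: conj_sub_scomp => //.
by rewrite /theta_letter /=; case: s.2; apply: Tloc_rev_strands.
Qed.

(** * The Garside element *)

Section GarsideElement.
Variable n : nat.
Notation beq := (bequiv n).

Global Instance bequiv_Equivalence : Equivalence beq.
Proof. by split; [exact: be_refl | exact: be_sym | exact: be_trans]. Qed.

Global Instance cat_bequiv_Proper : Proper (beq ==> beq ==> beq) (@cat (nat * bool)).
Proof. by move=> u u' Hu v v' Hv; apply: be_cat. Qed.

Global Instance cons_bequiv_Proper s : Proper (beq ==> beq) (cons s).
Proof. by move=> u v Huv; rewrite -cat1s -[s :: v]cat1s Huv. Qed.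

Definition sg k : nat * bool := (k, true).

Lemma bequiv_comm_far j (ks : seq nat) : j.+1 < n ->
  all (fun k => (k.+1 < j) || (j.+1 < k)) ks -> all (fun k => k.+1 < n) ks ->
  beq (sg j :: map sg ks) (map sg ks ++ [:: sg j]).
Proof.
move=> Hj; elim: ks => [|k ks IH] //= /andP [Hk Hks] /andP [Hkn Hksn].
rewrite -IH // -[sg j :: sg k :: _]/([:: sg j; sg k] ++ _).
by case/orP: Hk => Hk; [rewrite -(be_comm Hj Hk) | rewrite (be_comm Hkn Hk)].
Qed.

Lemma all_iota0 m (P : pred nat) : (forall k, k < m -> P k) -> all P (iota 0 m).
Proof. by move=> HP; apply/allP => k; rewrite mem_iota => /andP [_ /HP]. Qed.

(* [rise m] is sigma_1 ... sigma_m, locked to keep the braid words symbolic. *)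
Definition rise m := locked (map sg (iota 0 m)).

Lemma riseS m : rise m.+1 = rise m ++ [:: sg m].
Proof. by rewrite /rise -!lock -addn1 iotaD map_cat. Qed.

Lemma rise_far j p : j.+1 < n -> p < j -> beq (sg j :: rise p) (rise p ++ [:: sg j]).
Proof.
move=> Hj Hp; rewrite /rise -lock; apply: bequiv_comm_far => //.
  by apply: all_iota0 => k Hk; apply/orP; left; lia.
by apply: all_iota0 => k Hk; lia.
Qed.

Lemma rise_shift m k : m < n -> k.+1 < m -> beq (rise m ++ [:: sg k]) (sg k.+1 :: rise m).
Proof.
elim: m k => [|m IH] k Hm Hk //; rewrite riseS.
case: (ltnP k.+1 m) => Hkm.
- have Hc : beq [:: sg k; sg m] [:: sg m; sg k] by apply: be_comm; lia.
  by rewrite -catA /= -Hc -cat1s catA IH //; lia.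
- have -> : m = k.+1 by lia.
  have Hb : beq [:: sg k; sg k.+1; sg k] [:: sg k.+1; sg k; sg k.+1] by apply: be_braid; lia.
  rewrite riseS -!catA /= Hb -cat1s catA -rise_far //; lia.
Qed.

Lemma rise2_shift p : p.+1 < n ->
  beq (rise p.+1 ++ rise p ++ [:: sg p]) (sg 0 :: rise p.+1 ++ rise p).
Proof.
elim: p => [|p IH] Hp; first by rewrite /rise -!lock.
have Hb : beq [:: sg p.+1; sg p; sg p.+1] [:: sg p; sg p.+1; sg p] by symmetry; apply: be_braid.
have Hf : beq (sg p.+1 :: rise p) (rise p ++ [:: sg p.+1]) by apply: rise_far; lia.
transitivity (rise p.+1 ++ (sg p.+1 :: rise p) ++ [:: sg p; sg p.+1]).
  by rewrite !riseS -!catA /=.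
rewrite Hf -!catA /= Hb.
transitivity ((rise p.+1 ++ rise p ++ [:: sg p]) ++ [:: sg p.+1; sg p]).
  by rewrite -!catA /=.
rewrite IH; last by lia.
transitivity (sg 0 :: rise p.+1 ++ (rise p ++ [:: sg p.+1]) ++ [:: sg p]).
  by rewrite /= -!catA.
by rewrite -Hf !riseS -!catA /=.
Qed.

Fixpoint garside_idx m : seq nat := if m is m'.+1 then iota 0 m' ++ garside_idx m' else [::].

Definition garside m := locked (map sg (garside_idx m)).

Lemma garsideS m : garside m.+1 = rise m ++ garside m.
Proof. by rewrite /garside /rise -!lock /= map_cat. Qed.

Lemma garside_idx_lt m : all (fun k => k.+2 <= m) (garside_idx m).
Proof.
elim: m => [|m IH] //=; rewrite all_cat; apply/andP; split.
  by apply: all_iota0 => k Hk; lia.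
by apply: sub_all IH => k /=; lia.
Qed.

Lemma garside_far j m : j.+1 < n -> m <= j -> beq (sg j :: garside m) (garside m ++ [:: sg j]).
Proof.
move=> Hj Hm; rewrite /garside -lock; apply: bequiv_comm_far => //.
  by apply: sub_all (garside_idx_lt m) => k /= Hk; apply/orP; left; lia.
by apply: sub_all (garside_idx_lt m) => k /= Hk; lia.
Qed.

Lemma garside_shift m k : m < n -> k < m ->
  beq (garside m.+1 ++ [:: sg k]) (sg (m.-1 - k) :: garside m.+1).
Proof.
elim: m k => [|m IH] k Hm Hk //; rewrite garsideS.
case: (ltnP k m) => Hkm.
- rewrite -catA IH; try lia.
  have -> : m.+1.-1 - k = (m.-1 - k).+1 by lia.
  by rewrite -cat1s catA rise_shift //=; lia.
- have -> : k = m by lia.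
  rewrite subnn; case: m {IH Hk Hkm} Hm => [|p] Hp; first by rewrite /garside /rise -!lock.
  rewrite garsideS -!catA -garside_far //.
  transitivity ((rise p.+2 ++ rise p.+1 ++ [:: sg p.+1]) ++ garside p.+1).
    by rewrite -!catA.
  by rewrite rise2_shift //= -catA.
Qed.

Lemma garside_letter k b : k.+1 < n -> beq (garside n ++ [:: (k, b)]) ((n - k.+2, b) :: garside n).
Proof.
move=> Hk.
have Hsg : beq (garside n ++ [:: sg k]) (sg (n - k.+2) :: garside n).
  have := @garside_shift n.-1 k; have -> : n.-1.+1 = n by lia.
  have -> : n.-1.-1 - k = n - k.+2 by lia.
  by apply; lia.
case: b; first exact: Hsg.
set i := n - k.+2 in Hsg *.
have Hsg' : beq (garside n ++ [:: sg k]) ([:: sg i] ++ garside n) := Hsg.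
have Hi : i.+1 < n by rewrite /i; lia.
have Hci : beq ([:: (i, false)] ++ [:: sg i]) [::] := be_cancel false Hi.
have Hck : beq ([:: sg k] ++ [:: (k, false)]) [::] := be_cancel true Hk.
transitivity (([:: (i, false)] ++ [:: sg i]) ++ garside n ++ [:: (k, false)]).
  by rewrite Hci.
by rewrite -catA (catA [:: sg i]) -Hsg' -!catA Hck cats0.
Qed.

Lemma garside_flip beta : valid_braid n beta ->
  beq (garside n ++ beta) (flip_braid n beta ++ garside n).
Proof.
elim: beta => [|[k b] beta IH] /=; first by rewrite cats0.
case/andP=> Hk /IH Hbeta.
by rewrite -cat1s catA garside_letter // /= Hbeta.
Qed.

Definition braid_inv (w : seq (nat * bool)) := rev [seq (s.1, ~~ s.2) | s <- w].

Lemma braid_inv_cons k b w : braid_inv ((k, b) :: w) = braid_inv w ++ [:: (k, ~~ b)].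
Proof. by rewrite /braid_inv /= rev_cons cats1. Qed.

Lemma braid_invP w : valid_braid n w ->
  beq (w ++ braid_inv w) [::] /\ beq (braid_inv w ++ w) [::].
Proof.
elim: w => [|[k b] w IH] //= /andP [Hk /IH [Hr Hl]]; rewrite braid_inv_cons; split.
- by rewrite catA Hr /= be_cancel.
- have Hc : beq [:: (k, ~~ b); (k, b)] [::] by rewrite -{2}(negbK b) be_cancel.
  by rewrite -catA /= -[_ :: _ :: w]/([:: (k, ~~ b); (k, b)] ++ w) Hc /= Hl.
Qed.

Lemma valid_garside : valid_braid n (garside n).
Proof.
rewrite /valid_braid /garside -lock all_map.
by apply: sub_all (garside_idx_lt n) => k /=; lia.
Qed.

Lemma valid_braid_inv w : valid_braid n w -> valid_braid n (braid_inv w).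
Proof. by rewrite /valid_braid /braid_inv all_rev all_map. Qed.

End GarsideElement.

Section GarsideConjugation.
Variables (n : nat) (tau taui : nat -> aut2).
Hypothesis local : local_rep n tau taui.

Lemma garside_conj beta : valid_braid n beta ->
  conj_sub (theta n tau taui beta) (theta n tau taui (flip_braid n beta))
           (theta n tau taui (garside n)) (theta n tau taui (braid_inv (garside n))).
Proof.
move=> Hbeta; have HD := valid_garside n; have HDi := valid_braid_inv HD.
have [Hr Hl] := braid_invP HD.
have valid_cat w w' : valid_braid n w -> valid_braid n w' -> valid_braid n (w ++ w').
  by rewrite /valid_braid all_cat => -> ->.
split=> j; rewrite -theta_cat.
- exact: local (valid_cat _ _ HD HDi) _ Hr j.
- exact: local (valid_cat _ _ HDi HD) _ Hl j.
- rewrite -theta_cat; symmetry.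
  exact: local (valid_cat _ _ HD Hbeta) (valid_cat _ _ (valid_flip_braid Hbeta) HD)
    (garside_flip Hbeta) j.
Qed.

End GarsideConjugation.

(** * Gauge orbits of a basic pair *)

Lemma subst_sign_sub n (E : 'I_n -> bool) w :
  subst (sign_sub E) w = map (fun l => (l.1, l.2 == E l.1)) w.
Proof. by elim: w => [|[j b] w IH] //=; rewrite subst_cons IH /sign_sub; case: b; case: (E j). Qed.

Lemma reducedb_inv n (w : word n) : reducedb w -> reducedb (inv_word w).
Proof.
rewrite /reducedb /inv_word rev_sorted sorted_map; apply: sub_sorted => l l'.
by rewrite /relpre /nocancel /= inv_letterK eq_sym.
Qed.

Definition sign_letter (x y : bool) (l : letter 2) : letter 2 :=
  (l.1, l.2 == (if val l.1 == 0 then x else y)).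

Lemma sign_letter_inv x y l : sign_letter x y (inv_letter l) = inv_letter (sign_letter x y l).
Proof.
by case: l => k b; rewrite /sign_letter /inv_letter /=; case: ifP; case: x; case: y; case: b.
Qed.

Lemma sign_letter_inj x y : injective (sign_letter x y).
Proof.
move=> [k b] [k' b'] [<-]; rewrite /sign_letter /= => Eb; congr pair.
by move: Eb; case: ifP; case: b; case: b'; case: x; case: y.
Qed.

Lemma reducedb_sign_letter x y w : reducedb w -> reducedb (map (sign_letter x y) w).
Proof.
rewrite /reducedb sorted_map; apply: sub_sorted => l l'.
by rewrite /relpre /nocancel /= -sign_letter_inv (inj_eq (@sign_letter_inj x y)).
Qed.

Lemma gaugeE x y t : gauge x y t =
  (map (sign_letter x y) (if x then t.1 else inv_word t.1),
   map (sign_letter x y) (if y then t.2 else inv_word t.2)).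
Proof.
rewrite /gauge /sub_aut /scomp /sign2 !subst_sign_sub1 /= !subst_sign_sub.
by rewrite /aut_sub /pair2 /=; case: x; case: y.
Qed.

Lemma reduced_gauge x y t : reducedw t.1 -> reducedw t.2 ->
  reducedw (gauge x y t).1 /\ reducedw (gauge x y t).2.
Proof.
rewrite !reducedP gaugeE /= => H1 H2.
by split; apply: reducedb_sign_letter; [case: x | case: y] => //; apply: reducedb_inv.
Qed.

Lemma sign2_scomp x y x' y' : scomp (sign2 x y) (sign2 x' y') = sign2 (x' == x) (y' == y).
Proof.
apply: functional_extensionality => k; rewrite /scomp /sign2 subst_sign_sub1 /sign_sub.
by case: (ord2P k) => -> /=; [case: x; case: x' | case: y; case: y'].
Qed.

Lemma gauge_gauge x y x' y' t : gauge x y (gauge x' y' t) = gauge (x' == x) (y' == y) t.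
Proof.
rewrite {1}/gauge aut_sub_gauge !scompA -(scompA _ (sign2 x' y')) sign2_scomp.
by rewrite -!scompA sign2_scomp /gauge (eq_sym x) (eq_sym y).
Qed.

Definition rev_aut (t : aut2) : aut2 := (rev t.1, rev t.2).

Lemma rev_aut_gauge x y t : rev_aut (gauge x y t) = gauge x y (rev_aut t).
Proof.
rewrite !gaugeE /rev_aut /= -!map_rev.
by case: x; case: y; rewrite /inv_word ?map_rev.
Qed.

Lemma swap_sub_sign2 x y : scomp swap_sub (sign2 x y) = scomp (sign2 y x) swap_sub.
Proof.
apply: functional_extensionality => k; rewrite /scomp /sign2 /swap_sub subst_sign_sub1 subst_gen1.
by case: (ord2P k) => -> /=; rewrite /sign_sub /=; [case: x | case: y].
Qed.

Lemma swap_aut_gauge x y t : swap_aut (gauge x y t) = gauge y x (swap_aut t).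
Proof.
rewrite -[swap_aut _]aut_subK aut_sub_swap aut_sub_gauge /gauge aut_sub_swap.
by rewrite !scompA swap_sub_sign2 -!scompA swap_sub_sign2 !scompA.
Qed.

Lemma inverse_aut2P t s : inverse_aut2 t s <->
  feq (scomp (aut_sub s) (aut_sub t)) (@gen 2) /\ feq (scomp (aut_sub t) (aut_sub s)) (@gen 2).
Proof. by split=> [H | [H1 H2] k]; [split=> k; case: (H k) | split; [apply: H1 | apply: H2]]. Qed.

Lemma inverse_aut2_sym t s : inverse_aut2 t s -> inverse_aut2 s t.
Proof. by move=> H k; case: (H k). Qed.

Lemma inverse_aut2_gauge x y t s : inverse_aut2 t s -> inverse_aut2 (gauge x y t) (gauge x y s).
Proof.
have conj_gen (u v : aut2) : feq (scomp (aut_sub u) (aut_sub v)) (@gen 2) ->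
    feq (scomp (aut_sub (gauge x y u)) (aut_sub (gauge x y v))) (@gen 2).
  move=> Huv; rewrite !aut_sub_gauge -!scompA (scompA (sign2 x y) (sign2 x y)) sign2K scomp_genl.
  by rewrite (scompA (aut_sub u)) Huv scomp_genl sign2K.
by move/inverse_aut2P => [H1 H2]; apply/inverse_aut2P; split; apply: conj_gen.
Qed.

Lemma inverse_aut2_feq2 t t' s : inverse_aut2 t s -> feq2 t t' -> inverse_aut2 t' s.
Proof. by move/inverse_aut2P => [H1 H2]; rewrite /feq2 => Ht; apply/inverse_aut2P; rewrite -Ht. Qed.

Lemma inverse_aut2_uniq t s s' : inverse_aut2 t s -> inverse_aut2 t s' -> feq2 s s'.
Proof.
move/inverse_aut2P => [_ Hts] /inverse_aut2P [Hs't _].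
by rewrite /feq2 -[aut_sub s]scomp_genl -Hs't -scompA Hts scomp_genr.
Qed.

Lemma feq2_reduced t s : feq2 t s ->
  reducedw t.1 -> reducedw t.2 -> reducedw s.1 -> reducedw s.2 -> t = s.
Proof.
case: t s => [t1 t2] [s1 s2] Hts /= Ht1 Ht2 Hs1 Hs2; congr pair.
- exact: free_equiv_reduced (Hts ord_a) Ht1 Hs1.
- exact: free_equiv_reduced (Hts ord_b) Ht2 Hs2.
Qed.

Definition reduce2 (t : aut2) : aut2 := (reduce t.1, reduce t.2).

Lemma feq2_reduce2 t : feq2 t (reduce2 t).
Proof. by move=> k; case: (ord2P k) => -> /=; symmetry; apply: free_reduce. Qed.

Definition basic_pair (g h : aut2) :=
  [/\ inverse_aut2 g h,
      [/\ reducedw g.1, reducedw g.2, reducedw h.1 & reducedw h.2],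
      swap_aut g = gauge false false h /\ swap_aut h = gauge false false g &
      rev_aut g = gauge false false g /\ rev_aut h = gauge false false h].

Definition pick (g h : aut2) (b : bool) := if b then g else h.
Definition gauged (g h : aut2) b x y := gauge x y (pick g h b).
Definition gauge_quad (g h : aut2) (Q : quad) :=
  exists b x y z, Q = (gauged g h b x y, gauged g h b y z).

Lemma swapwK : involutive swapw.
Proof.
move=> w; rewrite /swapw -map_comp map_id_in // => [[k b]] _ /=.
by rewrite /swap_letter /=; case: (ord2P k) => ->.
Qed.

Lemma swapQK : involutive swapQ.
Proof. by case=> [[A B] [C D]]; rewrite /swapQ /= !swapwK. Qed.

Lemma backQK : involutive backQ.
Proof. by case=> [[A B] [C D]]; rewrite /backQ /= !revK. Qed.

Section BasicPair.
Variables g h : aut2.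
Hypothesis gh : basic_pair g h.

Lemma reduced_gauged b x y : reducedw (gauged g h b x y).1 /\ reducedw (gauged g h b x y).2.
Proof. by case: gh => _ [r1 r2 r3 r4] _ _; case: b; apply: reduced_gauge. Qed.

Lemma inverse_gauged b x y : inverse_aut2 (gauged g h b x y) (gauged g h (~~ b) x y).
Proof.
case: gh => Hi _ _ _; rewrite /gauged; case: b; apply: inverse_aut2_gauge => //.
exact: inverse_aut2_sym.
Qed.

Lemma swap_pick b : swap_aut (pick g h b) = gauge false false (pick g h (~~ b)).
Proof. by case: gh => _ _ [s1 s2] _; case: b. Qed.

Lemma rev_pick b : rev_aut (pick g h b) = gauge false false (pick g h b).
Proof. by case: gh => _ _ _ [r1 r2]; case: b. Qed.

Lemma gauge_quad_inv Q Q' : inv_step Q Q' -> gauge_quad g h Q' -> gauge_quad g h Q.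
Proof.
move=> [[a1 a2 a3 a4] _ HA HB] [b [x [y [z EQ']]]]; subst Q'.
case: Q a1 a2 a3 a4 HA HB => [A B] /= a1 a2 a3 a4 HA HB.
exists (~~ b), x, y, z.
have [h1 h2] := reduced_gauged (~~ b) x y; have [h3 h4] := reduced_gauged (~~ b) y z.
congr pair; apply: feq2_reduced => //.
- exact: inverse_aut2_uniq (inverse_aut2_sym HA) (inverse_gauged b x y).
- exact: inverse_aut2_uniq (inverse_aut2_sym HB) (inverse_gauged b y z).
Qed.

Lemma gauge_quad_swap Q : gauge_quad g h (swapQ Q) -> gauge_quad g h Q.
Proof.
move=> [b [x [y [z EQ]]]]; rewrite -[Q]swapQK EQ; exists (~~ b), (~~ z), (~~ y), (~~ x).
rewrite /swapQ /= -/(swap_aut (gauged g h b y z)) -/(swap_aut (gauged g h b x y)).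
by rewrite /gauged !swap_aut_gauge !swap_pick !gauge_gauge.
Qed.

Lemma gauge_quad_back Q : gauge_quad g h (backQ Q) -> gauge_quad g h Q.
Proof.
move=> [b [x [y [z EQ]]]]; rewrite -[Q]backQK EQ; exists b, (~~ x), (~~ y), (~~ z).
rewrite /backQ /= -/(rev_aut (gauged g h b y z)) -/(rev_aut (gauged g h b x y)).
by rewrite /gauged !rev_aut_gauge !rev_pick !gauge_gauge.
Qed.

Lemma gauge_quad_sym_equiv Q Q' : sym_equiv Q Q' -> gauge_quad g h Q' -> gauge_quad g h Q.
Proof.
elim=> // Q1 Q2 Q3 [H12 | [] ->] _ IH /IH.
- exact: gauge_quad_inv.
- exact: gauge_quad_swap.
- exact: gauge_quad_back.
Qed.

End BasicPair.

(** * Sequences of a given type *)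

Lemma bool_seq_of_steps (P : nat -> pred bool) (R : nat -> rel bool) x0 :
  P 0 x0 -> (forall i x, P i x -> exists2 y, R i x y & P i.+1 y) ->
  exists E : nat -> bool, forall i, R i (E i) (E i.+1).
Proof.
move=> P0 Pstep.
pose E := fix E i := if i is i'.+1 then R i' (E i') true && P i'.+1 true else x0.
have HE i : P i (E i) -> R i (E i) (E i.+1) /\ P i.+1 (E i.+1).
  move=> /Pstep [y Ry Py] /=; case Hnext: (R i (E i) true && P i.+1 true).
    by case/andP: Hnext.
  by case: y Ry Py Hnext => [-> -> // | Ry Py _].
have HP i : P i (E i) by elim: i => [|i /HE []].
by exists E => i; case: (HE i (HP i)).
Qed.

(* Lets overlapping quadruples of a sequence be re-parametrized along a single sign
   sequence, even when the parameters of a gauged automorphism are not unique. *)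
Definition gauged_coherent (g h : aut2) := forall b b' x w x' y' z,
  gauged g h b x w = gauged g h b' x' y' ->
  exists v z', gauged g h b x v = gauged g h b' x' y' /\ gauged g h b' y' z = gauged g h b v z'.

Section TypedSequences.
Variables (g h : aut2) (L : ltype).
Hypotheses (gh : basic_pair g h) (coherent : gauged_coherent g h).
Hypothesis listed_gauged : forall Q, Q \in listed L -> gauge_quad g h Q.

Lemma has_type_gauge_quad tau i : has_type L tau ->
  gauge_quad g h (reduce2 (tau i), reduce2 (tau i.+1)).
Proof. by move=> /(_ i) [Q /listed_gauged HQ /gauge_quad_sym_equiv]; apply. Qed.

Lemma has_type_gauged tau : has_type L tau ->
  exists b (E : nat -> bool), forall i, reduce2 (tau i) = gauged g h b (E i) (E i.+1).
Proof.
move=> Htau; have [b [x0 [w0 [z0 /(congr1 fst) /= E0]]]] := has_type_gauge_quad 0 Htau.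
pose P i x := [exists w, reduce2 (tau i) == gauged g h b x w].
pose R i x y := reduce2 (tau i) == gauged g h b x y.
suff [E HE] : exists E : nat -> bool, forall i, R i (E i) (E i.+1).
  by exists b, E => i; apply/eqP/HE.
apply: (@bool_seq_of_steps P R x0); first by apply/existsP; exists w0; rewrite E0.
move=> i x /existsP [w /eqP Hw].
have [b' [x' [y' [z' /pair_equal_spec [E1 E2]]]]] := has_type_gauge_quad i Htau.
have [v [z'' [Hv Hz]]] := coherent z' (etrans (esym Hw) E1).
by exists v; [rewrite /R E1 Hv | apply/existsP; exists z''; rewrite E2 Hz].
Qed.

Lemma has_type_feq2 tau taui : (forall i, inverse_aut2 (tau i) (taui i)) -> has_type L tau ->
  exists b (E : nat -> bool),
    (forall i, feq2 (tau i) (gauged g h b (E i) (E i.+1))) /\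
    (forall i, feq2 (taui i) (gauged g h (~~ b) (E i) (E i.+1))).
Proof.
move=> Hinv Htau; have [b [E HE]] := has_type_gauged Htau; exists b, E.
have Hfeq i : feq2 (tau i) (gauged g h b (E i) (E i.+1)) by rewrite -HE; apply: feq2_reduce2.
split=> // i; apply: inverse_aut2_uniq (Hinv i) _.
exact: inverse_aut2_feq2 (inverse_gauged gh _ _ _) (symmetry (Hfeq i)).
Qed.

Lemma pick_flip_conjugate n b beta : valid_braid n beta ->
  conjugate (theta n (fun=> pick g h b) (fun=> pick g h (~~ b)) beta)
            (theta n (fun=> pick g h (~~ b)) (fun=> pick g h b) (flip_braid n beta)).
Proof.
move=> Hbeta; do 2 eexists; apply: conj_sub_trans (rev_strands_theta _ _ Hbeta) _.
apply: (gauge_theta (E := fun=> false)) (valid_flip_braid Hbeta) => i.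
- by rewrite swap_pick.
- by rewrite swap_pick // negbK.
Qed.

Lemma has_type_conjugate_pick tau taui : (forall i, inverse_aut2 (tau i) (taui i)) ->
  has_type L tau -> exists b, forall n beta, valid_braid n beta ->
  conjugate (theta n tau taui beta) (theta n (fun=> pick g h b) (fun=> pick g h (~~ b)) beta).
Proof.
move=> Hinv Htau; have [b [E [Hfeq Hfeqi]]] := has_type_feq2 Hinv Htau.
by exists b => n beta Hbeta; do 2 eexists; apply: gauge_theta Hfeq Hfeqi _ Hbeta.
Qed.

Lemma has_type_iso_pres tau taui tau' taui' :
  (forall i, inverse_aut2 (tau i) (taui i)) -> (forall i, inverse_aut2 (tau' i) (taui' i)) ->
  local_inf tau' taui' -> has_type L tau -> has_type L tau' ->
  forall n beta, valid_braid n beta ->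
  iso_pres (Gpres n tau taui beta) (Gpres n tau' taui' beta).
Proof.
move=> Hinv Hinv' Hloc Htau Htau' n beta Hbeta.
have [b C] := has_type_conjugate_pick Hinv Htau.
have [b' C'] := has_type_conjugate_pick Hinv' Htau'.
apply: conjugate_iso_pres; apply: conjugate_trans (C _ _ Hbeta) _.
case: (eqVneq b' b) => [<- | Hb]; first exact: conjugate_sym (C' _ _ Hbeta).
have {}Hb : b' = ~~ b by move: Hb; case: (b); case: (b').
apply: conjugate_trans (pick_flip_conjugate b Hbeta) _.
have := C' _ _ (valid_flip_braid Hbeta); rewrite Hb negbK => /conjugate_sym Cflip.
apply: conjugate_trans Cflip _; apply: conjugate_sym.
by do 2 eexists; apply: garside_conj.
Qed.

End TypedSequences.

(** * The four types *)

Definition allb (P : pred bool) := P true && P false.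
Definition exb (P : pred bool) := P true || P false.

Lemma allbP (P : pred bool) : reflect (forall b, P b) (allb P).
Proof. by apply: (iffP andP) => [[Pt Pf] [] | HP]; last split. Qed.

Lemma exbP (P : pred bool) : reflect (exists b, P b) (exb P).
Proof.
by apply: (iffP orP) => [[Pb | Pb] | [[] Pb]]; [exists true | exists false | left | right].
Qed.

Lemma inverse_aut2_reduce t s :
  all (fun k => (reduce (subst (aut_sub s) (aut_sub t k)) == gen k) &&
                (reduce (subst (aut_sub t) (aut_sub s k)) == gen k)) [:: ord_a; ord_b] ->
  inverse_aut2 t s.
Proof.
move=> /allP H k.
have /H /andP [/eqP Hst /eqP Hts] : k \in [:: ord_a; ord_b].
  by case: (ord2P k) => ->; rewrite !inE eqxx ?orbT.
by split; apply/free_equivP; rewrite ?Hst ?Hts reduce_id.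
Qed.

Lemma gauged_coherent_dec g h :
  allb (fun b => allb (fun b' => allb (fun x => allb (fun w => allb (fun x' =>
  allb (fun y' => allb (fun z =>
    (gauged g h b x w == gauged g h b' x' y') ==>
    exb (fun v => exb (fun z' =>
      (gauged g h b x v == gauged g h b' x' y') &&
      (gauged g h b' y' z == gauged g h b v z')))))))))) ->
  gauged_coherent g h.
Proof.
move=> H b b' x w x' y' z E.
move: H => /allbP/(_ b)/allbP/(_ b')/allbP/(_ x)/allbP/(_ w)/allbP/(_ x')/allbP/(_ y')/allbP/(_ z).
rewrite E eqxx /= => /exbP [v /exbP [z' /andP [/eqP E1 /eqP E2]]].
by exists v, z'.
Qed.

Lemma listed_gauge_quad_dec g h L :
  all (fun Q => exb (fun b => exb (fun x => exb (fun y => exb (fun z =>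
                  Q == (gauged g h b x y, gauged g h b y z)))))) (listed L) ->
  forall Q, Q \in listed L -> gauge_quad g h Q.
Proof.
move/allP => H Q /H /exbP [b /exbP [x /exbP [y /exbP [z /eqP EQ]]]].
by exists b, x, y, z.
Qed.

Lemma basic_pair_dec g h :
  all (fun k => (reduce (subst (aut_sub h) (aut_sub g k)) == gen k) &&
                (reduce (subst (aut_sub g) (aut_sub h k)) == gen k)) [:: ord_a; ord_b] ->
  [&& reducedb g.1, reducedb g.2, reducedb h.1 & reducedb h.2] ->
  (swap_aut g == gauge false false h) && (swap_aut h == gauge false false g) ->
  (rev_aut g == gauge false false g) && (rev_aut h == gauge false false h) ->
  basic_pair g h.
Proof.
move=> /inverse_aut2_reduce Hinv /and4P [/reducedP r1 /reducedP r2 /reducedP r3 /reducedP r4].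
by move=> /andP [/eqP s1 /eqP s2] /andP [/eqP b1 /eqP b2].
Qed.

Definition gB : aut2 := ([:: lbi], [:: la]).
Definition hB : aut2 := ([:: lb], [:: lai]).
Definition gC : aut2 := ([:: la; lbi; la], [:: la]).
Definition hC : aut2 := ([:: lb], [:: lb; lai; lb]).
Definition gD : aut2 := ([:: lai; lbi; la], [:: lb; lb; la]).
Definition hD : aut2 := ([:: lb; la; la], [:: lb; lai; lbi]).

Lemma basic_pair_B : basic_pair gB hB. Proof. by apply: basic_pair_dec; vm_compute. Qed.
Lemma basic_pair_C : basic_pair gC hC. Proof. by apply: basic_pair_dec; vm_compute. Qed.
Lemma basic_pair_D : basic_pair gD hD. Proof. by apply: basic_pair_dec; vm_compute. Qed.

Lemma gauged_coherent_B : gauged_coherent gB hB.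
Proof. by apply: gauged_coherent_dec; vm_compute. Qed.
Lemma gauged_coherent_C : gauged_coherent gC hC.
Proof. by apply: gauged_coherent_dec; vm_compute. Qed.
Lemma gauged_coherent_D : gauged_coherent gD hD.
Proof. by apply: gauged_coherent_dec; vm_compute. Qed.

Lemma listed_B Q : Q \in listed TB -> gauge_quad gB hB Q.
Proof. by apply: listed_gauge_quad_dec; vm_compute. Qed.
Lemma listed_C Q : Q \in listed TC -> gauge_quad gC hC Q.
Proof. by apply: listed_gauge_quad_dec; vm_compute. Qed.
Lemma listed_D Q : Q \in listed TD -> gauge_quad gD hD Q.
Proof. by apply: listed_gauge_quad_dec; vm_compute. Qed.

Section Palindromes.
Variable n : nat.
Implicit Types (l : letter n) (w : word n).

Lemma reducedb_cons l w : reducedb (l :: w) = nocancel l (head l w) && reducedb w.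
Proof. by case: w => [|l' w] //=; rewrite /nocancel inv_letter_neq. Qed.

Lemma reducedb_nseq_cat r l w :
  reducedb w -> nocancel l (head l w) -> reducedb (nseq r l ++ w).
Proof.
move=> Hw Hhead; elim: r => [|r IH] //.
rewrite -[nseq r.+1 l ++ w]/(l :: (nseq r l ++ w)) reducedb_cons IH andbT.
by case: r {IH} => //=; rewrite /nocancel inv_letter_neq.
Qed.

Lemma reducedb_pal r l1 l2 l3 :
  nocancel l1 l2 -> nocancel l2 l3 -> reducedb (nseq r l1 ++ l2 :: nseq r l3).
Proof.
move=> H12 H23; apply: reducedb_nseq_cat => //.
have Hl3 : reducedb (nseq r l3).
  by rewrite -[nseq r l3]cats0; apply: reducedb_nseq_cat; rewrite //= /nocancel inv_letter_neq.
by rewrite reducedb_cons Hl3 andbT; case: r {Hl3} => //=; rewrite /nocancel inv_letter_neq.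
Qed.

Lemma inv_word_pal r l1 l2 l3 :
  inv_word (nseq r l1 ++ l2 :: nseq r l3) =
  nseq r (inv_letter l3) ++ inv_letter l2 :: nseq r (inv_letter l1).
Proof. by rewrite inv_word_cat inv_word_cons !inv_word_nseq -catA. Qed.

Lemma free_nseq_cancel r l w : free_equiv (nseq r l ++ nseq r (inv_letter l) ++ w) w.
Proof.
elim: r w => [|r IH] w; first by [].
have -> : nseq r.+1 l = nseq r l ++ [:: l] by rewrite -addn1 nseqD.
rewrite -catA.
transitivity (nseq r l ++ ([:: l; inv_letter l] ++ nseq r (inv_letter l) ++ w)); first by [].
by rewrite (pe_cancel [::] l) IH.
Qed.
Lemma free_nseq_cancelV r l w : free_equiv (nseq r (inv_letter l) ++ nseq r l ++ w) w.
Proof. by rewrite -{2}(inv_letterK l); apply: free_nseq_cancel. Qed.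

Lemma subst_nseq m (f : 'I_n -> word m) r l x :
  (if l.2 then f l.1 else inv_word (f l.1)) = [:: x] -> subst f (nseq r l) = nseq r x.
Proof. by move=> Hl; elim: r => [|r IH] //=; rewrite subst_cons Hl IH. Qed.

End Palindromes.

Lemma rev_pal (T : Type) r (x y z : T) :
  rev (nseq r x ++ y :: nseq r z) = nseq r z ++ y :: nseq r x.
Proof. by rewrite rev_cat rev_cons rev_nseq -cats1 -catA rev_nseq. Qed.

Lemma map_pal (T U : Type) (f : T -> U) r x y z :
  map f (nseq r x ++ y :: nseq r z) = nseq r (f x) ++ f y :: nseq r (f z).
Proof. by rewrite map_cat /= !map_nseq. Qed.

Lemma sign_letterTT w : map (sign_letter true true) w = w.
Proof. by rewrite map_id_in // => [[k b]] _; rewrite /sign_letter /=; case: ifP; case: b. Qed.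

Definition gA r : aut2 := (cnj r [:: lb], [:: la]).
Definition hA r : aut2 := ([:: lb], nseq r lbi ++ la :: nseq r lb).

Lemma cnjE r l : cnj r [:: l] = nseq r la ++ l :: nseq r lai.
Proof. by []. Qed.

Lemma cnjiE r l : cnji r [:: l] = nseq r lai ++ l :: nseq r la.
Proof. by []. Qed.

Lemma inverse_aut2_A r : inverse_aut2 (gA r) (hA r).
Proof.
move=> k; case: (ord2P k) => ->; rewrite /pair2 /gA /hA /=; split; rewrite ?subst_gen1 //.
- rewrite cnjE subst_cat subst_cons /= (subst_nseq (x := lb) _) // (subst_nseq (x := lbi) _) //.
  rewrite -!catA /= -[lbi]/(inv_letter lb) free_nseq_cancel.
  by rewrite -(cats0 (nseq r (inv_letter lb))) free_nseq_cancel.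
- rewrite subst_cat subst_cons /= (subst_nseq (x := lai) _) // (subst_nseq (x := la) _) // cnjE.
  rewrite -!catA /= -[lai]/(inv_letter la) free_nseq_cancelV.
  by rewrite -(cats0 (nseq r la)) free_nseq_cancelV.
Qed.

Lemma basic_pair_A r : basic_pair (gA r) (hA r).
Proof.
split; first exact: inverse_aut2_A.
- by split; apply/reducedP; rewrite //= ?cnjE; apply: reducedb_pal.
- by rewrite /gA /hA !gaugeE /swap_aut /swapw /= cnjE !inv_word_pal !map_pal.
- by rewrite /gA /hA !gaugeE /rev_aut /= cnjE !inv_word_pal !map_pal !rev_pal.
Qed.

Lemma listed_A r Q : Q \in listed (TA r) -> gauge_quad (gA r) (hA r) Q.
Proof.
rewrite !inE => /or3P [] /eqP ->.
- by exists true, true, true, true; rewrite /gauged /= gaugeE /= !sign_letterTT.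
- exists true, true, true, false.
  by rewrite /gauged /= !gaugeE /= !sign_letterTT /gA !cnjE !map_pal.
- exists true, true, false, true.
  by rewrite /gauged /= !gaugeE /= /gA !cnjE !cnjiE !inv_word_pal !map_pal.
Qed.

Lemma gauged_A_inj r b x w b' x' y' :
  gauged (gA r.+1) (hA r.+1) b x w = gauged (gA r.+1) (hA r.+1) b' x' y' ->
  [/\ b = b', x = x' & w = y'].
Proof.
rewrite /gauged !gaugeE /gA /hA cnjE.
by case: b; case: b'; case: x; case: x'; case: w; case: y';
  rewrite ?inv_word_pal /= => E; (try by split); congruence.
Qed.

Lemma gauged_coherent_A r : gauged_coherent (gA r) (hA r).
Proof.
case: r => [|r]; first by apply: gauged_coherent_dec; vm_compute.
by move=> b b' x w x' y' z /gauged_A_inj [<- <- <-]; exists w, z.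
Qed.

Definition basic_auts (L : ltype) : aut2 * aut2 :=
  match L with TA r => (gA r, hA r) | TB => (gB, hB) | TC => (gC, hC) | TD => (gD, hD) end.

Lemma basic_autsP L : let: (g, h) := basic_auts L in
  [/\ basic_pair g h, gauged_coherent g h & forall Q, Q \in listed L -> gauge_quad g h Q].
Proof.
case: L => [r|||] /=.
- by split; [exact: basic_pair_A | exact: gauged_coherent_A | exact: listed_A].
- by split; [exact: basic_pair_B | exact: gauged_coherent_B | exact: listed_B].
- by split; [exact: basic_pair_C | exact: gauged_coherent_C | exact: listed_C].
- by split; [exact: basic_pair_D | exact: gauged_coherent_D | exact: listed_D].
Qed.

Theorem theorem4p5 (L : ltype) :
  (forall tau taui tau' taui' : nat -> aut2,
     (forall i, inverse_aut2 (tau i) (taui i)) ->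
     (forall i, inverse_aut2 (tau' i) (taui' i)) ->
     local_inf tau taui -> local_inf tau' taui' ->
     has_type L tau -> has_type L tau' ->
     forall (n : nat) (beta : seq (nat * bool)), valid_braid n beta ->
       iso_pres (Gpres n tau taui beta) (Gpres n tau' taui' beta))
  /\
  (forall (tau taui : nat -> aut2) (t ti : aut2),
     (forall i, inverse_aut2 (tau i) (taui i)) -> inverse_aut2 t ti ->
     local_inf tau taui -> local_inf (fun _ => t) (fun _ => ti) ->
     has_type L tau -> has_type L (fun _ => t) ->
     forall (n : nat) (beta : seq (nat * bool)), valid_braid n beta ->
       iso_pres (Gpres n tau taui beta) (Gpres n (fun _ => t) (fun _ => ti) beta)).
Proof.
have := basic_autsP L; case: (basic_auts L) => g h [gh coherent listed_gauged].
have iso := has_type_iso_pres gh coherent listed_gauged.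
by split=> [tau taui tau' taui' Hinv Hinv' _ | tau taui t ti Hinv Hinv' _]; apply: iso.
Qed.
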